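(* Let $d$ and $p$ be integers with $d>p\ge 2$ and let \[ f_{d,p}(m)=\sum_{j=1}^{p}\binom{j+m-2}{j-1}\binom{d-j+m}{d-j}. \] Then every integer $k$ with $-\left\lfloor\frac{d-1}{2}\right\rfloor\le k\le -1$ is a root of $f_{d,p}$.
   Context: For an integer $a\ge 0$, $\binom{a+x}{a}$ denotes the polynomial $\prod_{i=1}^{a}(x+i)/a!$ in $x$; so $\binom{j+m-2}{j-1}=\prod_{i=0}^{j-2}(m+i)/(j-1)!$ and $\binom{d-j+m}{d-j}=\prod_{i=1}^{d-j}(m+i)/(d-j)!$. *)

From HB Require Import structures.
From mathcomp Require Import all_boot all_order all_algebra.
Set Implicit Arguments. Unset Strict Implicit. Unset Printing Implicit Defensive.
Import Order.TTheory GRing.Theory Num.Theory.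
Local Open Scope ring_scope.

(* binpoly a s = (1/a!) * prod_{i=0}^{a-1} (X + (s+i)), a polynomial in X over rat.
   With s = 0 this is binom(j+m-2, j-1) for a = j-1;
   with s = 1 this is binom(d-j+m, d-j) for a = d-j. *)
Definition binpoly (a s : nat) : {poly rat} :=
  (a`!%:R)^-1 *: \prod_(i < a) ('X + (s + i)%:R%:P).

Definition fdp (d p : nat) : {poly rat} :=
  \sum_(1 <= j < p.+1) binpoly (j - 1) 0 * binpoly (d - j) 1.

From HB Require Import structures.
From mathcomp Require Import all_boot all_order all_algebra.
From mathcomp Require Import zify.
Import Order.TTheory GRing.Theory Num.Theory.
Local Open Scope ring_scope.

(* binom(j+m-2, j-1) vanishes at m = -1, ..., -(j-1) and binom(d-j+m, d-j)
   at m = -1, ..., -(d-j).  For -m with 2m < d one of the two ranges always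
   covers it, so every summand of f_{d,p} vanishes at -m. *)

Lemma binpoly_root (a s n : nat) : (s <= n < s + a)%N ->
  root (binpoly a s) (- n%:R).
Proof.
move=> /andP[sn na]; have ha : (n - s < a)%N by lia.
rewrite /root /binpoly hornerZ horner_prod; apply/eqP.
rewrite (bigD1 (Ordinal ha)) //= hornerD hornerX hornerC subnKC //.
by rewrite addNr mul0r mulr0.
Qed.

Lemma binpoly_term_root (d j m : nat) : (0 < m)%N -> (2 * m < d)%N ->
  root (binpoly (j - 1) 0 * binpoly (d - j) 1) (- m%:R).
Proof.
move=> m_gt0 md; rewrite rootM.
have [mj | jm] := ltnP m (j - 1).
  by rewrite binpoly_root.
have mdj : (1 <= m < 1 + (d - j))%N by lia.
by rewrite (binpoly_root _ _ _ mdj) orbT.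
Qed.

(* The point enters through an equation: matching [- m%:R] against the
   theorem's [k%:~R] inside [root (fdp d p) _] is prohibitively slow. *)
Lemma fdp_root_neg (d p m : nat) (x : rat) : (0 < m)%N -> (2 * m < d)%N ->
  x = - m%:R -> root (fdp d p) x.
Proof.
move=> m_gt0 md ->; rewrite /root /fdp horner_sum; apply/eqP.
by apply: big1_seq => j _; apply/eqP/binpoly_term_root.
Qed.

Theorem theorem2p7 (d p : nat) (hp : (2 <= p)%N) (hdp : (p < d)%N) (k : int)
  (hk1 : - (((d - 1) %/ 2)%N)%:Z <= k) (hk2 : k <= -1) :
  root (fdp d p) (k%:~R).
Proof.
case: k hk1 hk2 => [n | n] // hk1 _.
have hn : (n.+1 <= (d - 1) %/ 2)%N by move: hk1; rewrite NegzE lerN2 lez_nat.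
have md : (2 * n.+1 < d)%N by move: hn; rewrite leq_divRL //; lia.
exact: (@fdp_root_neg d p n.+1).
Qed.
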